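(* Let $1\le d<n$, $\underline i=i_1\cdots i_d\in I(d,n)$, and consider root operators $f_{s,h},f_{t,k}$ (all operators below are assumed to be defined, i.e. their indices admissible). (i) If $|h-k|>1$, or $|h-k|=1$ and $|s-t|>1$, then $f_{s,h}f_{t,k}(\underline i)=f_{t,k}f_{s,h}(\underline i)$. (ii) If $|s-t|>1$ or $s=t$, then $f_{s,h}f_{t,h}(\underline i)=0=f_{t,h}f_{s,h}(\underline i)$. (iii) $f_{s,h}f_{s+1,h}(\underline i)=0$, and $f_{s+1,h}f_{s,h}(\underline i)\neq0$ if and only if $i_h=s$ and either $h=d$ or $i_{h+1}>s+2$. (iv) $f_{s+1,h+1}f_{s,h}(\underline i)=f_{s,h+1}f_{s+1,h}(\underline i)=f_{s+1,h}f_{s,h+1}(\underline i)=0$, and $f_{s,h}f_{s+1,h+1}(\underline i)\neq0$ if and only if $i_h=s$, $i_{h+1}=s+1$ and either $h+1=d$ or $i_{h+2}>s+2$.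
   Context: $I(d,n)$ is the set of $d$-element subsets of $\{1,\dots,n\}$ written as increasing sequences. For $1\le h\le d$ and $h\le s<n-d+h$, the root operator $f_{s,h}$ on $I(d,n)\sqcup\{0\}$ ($0$ a formal symbol) is defined by $f_{s,h}(0)=0$ and $f_{s,h}(i_1\cdots i_d)=i_1\cdots i_{h-1}(s+1)i_{h+1}\cdots i_d$ if $i_h=s$ and either $h=d$ or $i_{h+1}\ge s+2$, and $0$ otherwise. *)

From mathcomp Require Import all_boot.
Set Implicit Arguments. Unset Strict Implicit. Unset Printing Implicit Defensive.

(* I(d,n): d-element subsets of {1,...,n}, written as strictly increasing
   sequences i_1 ... i_d (stored as a seq nat, 0-based storage). *)
Definition in_I (d n : nat) (i : seq nat) : bool :=
  [&& size i == d, sorted ltn i & all (fun x => 0 < x <= n) i].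

Definition entry (i : seq nat) (h : nat) : nat := nth 0 i h.-1.

(* I(d,n) ⊔ {0} is modelled by option (seq nat), with None playing 0. *)

Definition admissible (d n s h : nat) : bool :=
  [&& 0 < h, h <= d, h <= s & s + d < n + h].

Definition rootop (d s h : nat) (x : option (seq nat)) : option (seq nat) :=
  match x with
  | None => None
  | Some i =>
      if (entry i h == s) && ((h == d) || (s + 2 <= entry i h.+1))
      then Some (set_nth 0 i h.-1 s.+1)
      else None
  end.

(** The operator f_{s,h} reads only the entries i_h and i_{h+1} and writes
    only i_h, replacing s by s+1.  Two operators acting at positions at least
    two apart therefore commute; at adjacent positions h, h+1 the only
    interaction is through the test i_{h+1} >= s+2, which f_{t,h+1} can switch
    on exactly when t = s+1.  Every vanishing statement comes from an entry
    that would have to take two different values, and the non-vanishing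
    criteria are obtained by composing the two defining conditions. *)
From mathcomp Require Import all_boot zify.

Definition raise (s h : nat) (i : seq nat) : seq nat := set_nth 0 i h.-1 s.+1.

Lemma entry_raise s h i j : 0 < h -> 0 < j ->
  entry (raise s h i) j = if j == h then s.+1 else entry i j.
Proof. by rewrite /entry nth_set_nth; case: j h => [|j] [|h]. Qed.

Lemma raiseC s t h k i : 0 < h -> 0 < k -> h != k ->
  raise s h (raise t k i) = raise t k (raise s h i).
Proof. by rewrite /raise set_set_nth => *; rewrite ifN //; lia. Qed.

Section RootOperators.

Variable d : nat.

Definition raisable (s h : nat) (i : seq nat) : bool :=
  (entry i h == s) && ((h == d) || (s + 2 <= entry i h.+1)).

Lemma rootopE s h i :
  rootop d s h (Some i) = if raisable s h i then Some (raise s h i) else None.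
Proof. by []. Qed.

Lemma rootop_rootopE s h t k i :
  rootop d s h (rootop d t k (Some i)) =
  if raisable t k i && raisable s h (raise t k i)
  then Some (raise s h (raise t k i)) else None.
Proof. by rewrite rootopE; case: ifP. Qed.

Lemma raisable_raise_far s h t k i : 0 < h -> 0 < k -> k != h -> k != h.+1 ->
  raisable s h (raise t k i) = raisable s h i.
Proof.
by move=> h0 k0 kh kh1; rewrite /raisable !entry_raise // !ifN // eq_sym.
Qed.

Lemma raisable_raise_next (s h t : nat) i :
  0 < h -> t != s.+1 -> raisable t h.+1 i ->
  raisable s h (raise t h.+1 i) = raisable s h i.
Proof.
move=> h0 ts /andP[/eqP it _].
rewrite /raisable !entry_raise // eqxx (ltn_eqF (ltnSn h)) it.
by case: (entry i h == s) (h == d) => [] [] //=; lia.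
Qed.

Lemma rootopC_far s h t k x : 0 < h -> h.+1 < k ->
  rootop d s h (rootop d t k x) = rootop d t k (rootop d s h x).
Proof.
case: x => // i h0 hk; have k0 : 0 < k by lia.
have [kh kh1 hk1 hk2] : [/\ k != h, k != h.+1, h != k & h != k.+1] by split; lia.
by rewrite !rootop_rootopE raiseC // !raisable_raise_far // andbC.
Qed.

Lemma rootopC_next (s h t : nat) x : 0 < h -> t != s.+1 ->
  rootop d s h (rootop d t h.+1 x) = rootop d t h.+1 (rootop d s h x).
Proof.
case: x => // i h0 ts; have [hh1 hh2] : h != h.+1 /\ h != h.+2 by split; lia.
rewrite !rootop_rootopE raiseC // (@raisable_raise_far t h.+1 s h i) //.
case It: (raisable t h.+1 i); last by rewrite andbF.
by rewrite raisable_raise_next // andbC.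
Qed.

Lemma rootop_rootop_same_None (s h t : nat) x : 0 < h -> s != t.+1 ->
  rootop d s h (rootop d t h x) = None.
Proof.
case: x => // i h0 st; rewrite rootop_rootopE /raisable entry_raise // eqxx.
by case: ifP => // /andP[_ /andP[/eqP ts _]]; rewrite ts eqxx in st.
Qed.

Lemma rootop_next_rootop_None u t h x : 0 < h -> h < d -> u < t.+2 ->
  rootop d u h.+1 (rootop d t h x) = None.
Proof.
case: x => // i h0 hd ut; have [hh1 hh2] : h != h.+1 /\ h != h.+2 by split; lia.
rewrite rootop_rootopE raisable_raise_far //.
case: ifP => // /andP[/andP[_ ih] /andP[/eqP ih1 _]]; lia.
Qed.

Lemma rootop_rootop_next_None u t h x : 0 < h -> h < d -> t <= u ->
  rootop d u h (rootop d t h.+1 x) = None.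
Proof.
case: x => // i h0 hd tu; rewrite rootop_rootopE /raisable !entry_raise //.
rewrite eqxx (ltn_eqF (ltnSn h)); case: ifP => // /andP[_ /andP[_ H]]; lia.
Qed.

Lemma rootop_succ_rootop_neq_None s h i : 0 < h ->
  rootop d s.+1 h (rootop d s h (Some i)) <> None <->
  entry i h = s /\ (h = d \/ s + 2 < entry i h.+1).
Proof.
move=> h0; rewrite rootop_rootopE /raisable !entry_raise // eqxx (gtn_eqF (ltnSn h)).
by case: ifP => H; split => // *; lia.
Qed.

Lemma rootop_rootop_succ_next_neq_None s h i : 0 < h -> h < d ->
  rootop d s h (rootop d s.+1 h.+1 (Some i)) <> None <->
  [/\ entry i h = s, entry i h.+1 = s.+1 & (h.+1 = d \/ s + 2 < entry i h.+2)].
Proof.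
move=> h0 hd; rewrite rootop_rootopE /raisable !entry_raise // eqxx (ltn_eqF (ltnSn h)).
move: (entry i h) (entry i h.+1) (entry i h.+2) => a b c.
by case: ifP => [H | /negbT H]; split => //; [move=> _; split | case=> ? ? ? _]; lia.
Qed.

End RootOperators.

Theorem proposition2p13 (d n : nat) (i : seq nat) :
  1 <= d -> d < n -> in_I d n i ->
  (* (i) *)
  (forall s t h k, admissible d n s h -> admissible d n t k ->
     (h.+1 < k) || (k.+1 < h) ||
     (((h == k.+1) || (k == h.+1)) && ((s.+1 < t) || (t.+1 < s))) ->
     rootop d s h (rootop d t k (Some i)) = rootop d t k (rootop d s h (Some i)))
  /\
  (* (ii) *)
  (forall s t h, admissible d n s h -> admissible d n t h ->
     (s.+1 < t) || (t.+1 < s) || (s == t) ->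
     rootop d s h (rootop d t h (Some i)) = None /\
     rootop d t h (rootop d s h (Some i)) = None)
  /\
  (* (iii) *)
  (forall s h, admissible d n s h -> admissible d n s.+1 h ->
     rootop d s h (rootop d s.+1 h (Some i)) = None /\
     (rootop d s.+1 h (rootop d s h (Some i)) <> None <->
        entry i h = s /\ (h = d \/ s + 2 < entry i h.+1)))
  /\
  (* (iv) *)
  (forall s h,
     (admissible d n s.+1 h.+1 -> admissible d n s h ->
        rootop d s.+1 h.+1 (rootop d s h (Some i)) = None) /\
     (admissible d n s h.+1 -> admissible d n s.+1 h ->
        rootop d s h.+1 (rootop d s.+1 h (Some i)) = None) /\
     (admissible d n s.+1 h -> admissible d n s h.+1 ->
        rootop d s.+1 h (rootop d s h.+1 (Some i)) = None) /\
     (admissible d n s h -> admissible d n s.+1 h.+1 ->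
        (rootop d s h (rootop d s.+1 h.+1 (Some i)) <> None <->
           [/\ entry i h = s, entry i h.+1 = s.+1 &
               (h.+1 = d \/ s + 2 < entry i h.+2)]))).
Proof.
move=> _ _ _; split; [|split; [|split]].
- move=> s t h k /and4P[h0 _ _ _] /and4P[k0 _ _ _].
  case/orP=> [/orP[hk|kh]|/andP[/orP[/eqP->|/eqP->] st]].
  + exact: rootopC_far.
  + by symmetry; apply: rootopC_far.
  + by symmetry; apply: rootopC_next => //; lia.
  + by apply: rootopC_next => //; lia.
- by move=> s t h /and4P[h0 _ _ _] _ st; split; apply: rootop_rootop_same_None => //; lia.
- move=> s h /and4P[h0 _ _ _] _; split; last exact: rootop_succ_rootop_neq_None.
  by apply: rootop_rootop_same_None => //; lia.
- move=> s h; split; [|split; [|split]].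
  + move=> /and4P[_ hd _ _] /and4P[h0 _ _ _].
    by apply: rootop_next_rootop_None => //; lia.
  + move=> /and4P[_ hd _ _] /and4P[h0 _ _ _].
    by apply: rootop_next_rootop_None => //; lia.
  + move=> /and4P[h0 _ _ _] /and4P[_ hd _ _].
    by apply: rootop_rootop_next_None => //; lia.
  + move=> /and4P[h0 _ _ _] /and4P[_ hd _ _].
    exact: rootop_rootop_succ_next_neq_None.
Qed.
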